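(* Let $\mathcal{B}\in\mathbb{R}^{l\times m\times n}$ and integers $r_1<k_1<l$, $r_2<k_2<m$, $r_3<k_3<n$, and let $\mathcal{C}\in\mathbb{R}^{k_1\times k_2\times k_3}$ be the leading subtensor $\mathcal{C}=\mathcal{B}(1{:}k_1,1{:}k_2,1{:}k_3)$. Define $f(X,Y,Z)=\|\mathcal{B}\cdot(X,Y,Z)\|^2$ on $\mathrm{Gr}^3=(\mathrm{Gr}(l,r_1),\mathrm{Gr}(m,r_2),\mathrm{Gr}(n,r_3))$ and $g(U,V,W)=\|\mathcal{C}\cdot(U,V,W)\|^2$ on $\mathrm{Gr}^3_k=(\mathrm{Gr}(k_1,r_1),\mathrm{Gr}(k_2,r_2),\mathrm{Gr}(k_3,r_3))$. Let $E_0=\left(\begin{pmatrix}I_{r_1}\\0\end{pmatrix},\begin{pmatrix}I_{r_2}\\0\end{pmatrix},\begin{pmatrix}I_{r_3}\\0\end{pmatrix}\right)\in\mathrm{Gr}^3$ and let $E_{0k}$ be the point of $\mathrm{Gr}^3_k$ given by the same block formulas (with zero blocks of the appropriate smaller sizes). If the Grassmann Hessian of $f$ is positive definite on the tangent space of $\mathrm{Gr}^3$ at $E_0$, then the Grassmann Hessian of $g$ is positive definite on the tangent space of $\mathrm{Gr}^3_k$ at $E_{0k}$.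
   Context: For a tensor $\mathcal{B}$ and matrices $X,Y,Z$ with compatible row dimensions, $\mathcal{B}\cdot(X,Y,Z)$ is the tensor with entries $\sum_{\alpha,\beta,\gamma}x_{\alpha i}y_{\beta j}z_{\gamma k}b_{\alpha\beta\gamma}$; norms are Frobenius norms. $\mathrm{Gr}(l,r)$ denotes the Grassmann manifold of $r$-dimensional subspaces of $\mathbb{R}^l$, a point being represented by a matrix $X\in\mathbb{R}^{l\times r}$ with orthonormal columns (the equivalence class $\{XQ: Q\in\mathbb{R}^{r\times r}\text{ orthogonal}\}$); the functions $f,g$ are well defined on these products since they are invariant under such right multiplications. The Grassmann Hessian is the Riemannian Hessian on the product manifold. *)

From HB Require Import structures.
From mathcomp Require Import all_boot all_order all_algebra.
From mathcomp Require Import reals topology normedtype derive.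
Set Implicit Arguments. Unset Strict Implicit. Unset Printing Implicit Defensive.
Import Order.TTheory GRing.Theory Num.Theory numFieldNormedType.Exports.
Local Open Scope ring_scope.

Definition tensor3 (R : Type) (l m n : nat) := 'I_l -> 'I_m -> 'I_n -> R.

Definition mlprod (R : realType) (l m n p q s : nat) (B : tensor3 R l m n)
  (X : 'M[R]_(l, p)) (Y : 'M[R]_(m, q)) (Z : 'M[R]_(n, s)) : tensor3 R p q s :=
  fun i j k => \sum_(a < l) \sum_(b < m) \sum_(c < n) X a i * Y b j * Z c k * B a b c.

Definition tnorm2 (R : realType) (p q s : nat) (T : tensor3 R p q s) : R :=
  \sum_(i < p) \sum_(j < q) \sum_(k < s) T i j k ^+ 2.

Definition objf (R : realType) (l m n p q s : nat) (B : tensor3 R l m n)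
  (X : 'M[R]_(l, p)) (Y : 'M[R]_(m, q)) (Z : 'M[R]_(n, s)) : R :=
  tnorm2 (mlprod B X Y Z).

Definition lead_sub (R : Type) (l m n k1 k2 k3 : nat)
  (h1 : (k1 <= l)%N) (h2 : (k2 <= m)%N) (h3 : (k3 <= n)%N)
  (B : tensor3 R l m n) : tensor3 R k1 k2 k3 :=
  fun a b c => B (widen_ord h1 a) (widen_ord h2 b) (widen_ord h3 c).

Definition E0 (R : realType) (l r : nat) : 'M[R]_(l, r) :=
  \matrix_(i < l, j < r) ((i : nat) == j)%:R.

(* Horizontal (tangent) space of Gr(l,r) at X (orthonormal columns):
   Delta with X^T Delta = 0. *)
Definition grass_tangent (R : realType) (l r : nat) (X D : 'M[R]_(l, r)) : Prop :=
  X^T *m D = 0.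

(* Grassmann (Riemannian) Hessian quadratic form on the product
   Gr(l,p) x Gr(m,q) x Gr(n,s) of a function F (Euclidean extension, invariant
   under right orthogonal multiplication), at (X,Y,Z) in direction
   (DX,DY,DZ) of the tangent space (Edelman-Arias-Smith formula):
     Hess F [D,D] = F_YY(D,D) - <grad F, (X DX^T DX, Y DY^T DY, Z DZ^T DZ)>,
   where F_YY(D,D) = d^2/dt^2 F(X+tDX, Y+tDY, Z+tDZ) at t=0 and
   the second term is the directional derivative of F at (X,Y,Z) in the
   direction (X DX^T DX, Y DY^T DY, Z DZ^T DZ). *)
Definition grass_hess3 (R : realType) (l m n p q s : nat)
  (F : 'M[R]_(l, p) -> 'M[R]_(m, q) -> 'M[R]_(n, s) -> R)
  (X : 'M[R]_(l, p)) (Y : 'M[R]_(m, q)) (Z : 'M[R]_(n, s))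
  (DX : 'M[R]_(l, p)) (DY : 'M[R]_(m, q)) (DZ : 'M[R]_(n, s)) : R :=
  derive1 (derive1 (fun t : R => F (X + t *: DX) (Y + t *: DY) (Z + t *: DZ))) 0
  - derive1 (fun t : R => F (X + t *: (X *m (DX^T *m DX)))
                             (Y + t *: (Y *m (DY^T *m DY)))
                             (Z + t *: (Z *m (DZ^T *m DZ)))) 0.

Definition grass_hess3_posdef (R : realType) (l m n p q s : nat)
  (F : 'M[R]_(l, p) -> 'M[R]_(m, q) -> 'M[R]_(n, s) -> R)
  (X : 'M[R]_(l, p)) (Y : 'M[R]_(m, q)) (Z : 'M[R]_(n, s)) : Prop :=
  forall (DX : 'M[R]_(l, p)) (DY : 'M[R]_(m, q)) (DZ : 'M[R]_(n, s)),
    grass_tangent X DX -> grass_tangent Y DY -> grass_tangent Z DZ ->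
    ~ (DX = 0 /\ DY = 0 /\ DZ = 0) ->
    0 < grass_hess3 F X Y Z DX DY DZ.

(** The block matrix [E0 l k = (I_k; 0)] is an isometric embedding of
    [R^k] into [R^l] which maps [E0 k r] to [E0 l r], and composing with it
    in every mode turns [B] into its leading subtensor [C].  Hence
    [g(U,V,W) = f(E0 U, E0 V, E0 W)], and both the curve and the correction
    term of the Grassmann Hessian of [g] at [E0k] in a direction [D] are
    those of [f] at [E0] in the direction [E0 D], which is again tangent and
    nonzero when [D] is. *)

From HB Require Import structures.
From mathcomp Require Import all_boot all_order all_algebra.
From mathcomp Require Import boolp reals topology normedtype derive.
Set Implicit Arguments. Unset Strict Implicit. Unset Printing Implicit Defensive.
Import Order.TTheory GRing.Theory Num.Theory.
Local Open Scope ring_scope.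

Section MultilinearProduct.
Variable R : realType.

Lemma mlprodE (l m n p q s : nat) (B : tensor3 R l m n)
    (X : 'M[R]_(l, p)) (Y : 'M[R]_(m, q)) (Z : 'M[R]_(n, s)) i j k :
  mlprod B X Y Z i j k =
  \sum_(a < l) X a i * \sum_(b < m) Y b j * \sum_(c < n) Z c k * B a b c.
Proof.
apply: eq_bigr => a _; rewrite big_distrr; apply: eq_bigr => b _ /=.
rewrite !big_distrr /=.
by apply: eq_bigr => c _; rewrite !mulrA.
Qed.

Lemma sum_mulmx_mull (l p p' : nat) (X : 'M[R]_(l, p)) (U : 'M[R]_(p, p'))
    (i : 'I_p') (G : 'I_l -> R) :
  \sum_(a < l) (X *m U) a i * G a = \sum_(b < p) U b i * \sum_(a < l) X a b * G a.
Proof.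
under eq_bigr do rewrite mxE mulr_suml.
rewrite exchange_big; apply: eq_bigr => b _ /=; rewrite big_distrr /=.
by apply: eq_bigr => a _; rewrite mulrCA mulrA.
Qed.

Lemma sum_mul_sumA (I J : finType) (x : I -> R) (y : J -> R) (T : I -> J -> R) :
  \sum_i x i * \sum_j y j * T i j = \sum_j y j * \sum_i x i * T i j.
Proof.
under eq_bigr do rewrite big_distrr.
rewrite exchange_big; apply: eq_bigr => j _; rewrite big_distrr /=.
by apply: eq_bigr => i _; rewrite mulrCA.
Qed.

Lemma mlprod_mulmx (l m n p q s p' q' s' : nat) (B : tensor3 R l m n)
    (X : 'M[R]_(l, p)) (Y : 'M[R]_(m, q)) (Z : 'M[R]_(n, s))
    (U : 'M[R]_(p, p')) (V : 'M[R]_(q, q')) (W : 'M[R]_(s, s')) :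
  mlprod B (X *m U) (Y *m V) (Z *m W) = mlprod (mlprod B X Y Z) U V W.
Proof.
apply: funext => i; apply: funext => j; apply: funext => k.
rewrite !mlprodE sum_mulmx_mull; apply: eq_bigr => a' _; congr (_ * _).
under eq_bigr do under eq_bigr do rewrite sum_mulmx_mull.
under eq_bigr do rewrite sum_mulmx_mull.
rewrite sum_mul_sumA; apply: eq_bigr => b' _; congr (_ * _).
under eq_bigr do rewrite sum_mul_sumA.
rewrite sum_mul_sumA; apply: eq_bigr => c' _; congr (_ * _).
by rewrite mlprodE.
Qed.

Lemma objf_mulmx (l m n p q s p' q' s' : nat) (B : tensor3 R l m n)
    (X : 'M[R]_(l, p)) (Y : 'M[R]_(m, q)) (Z : 'M[R]_(n, s))
    (U : 'M[R]_(p, p')) (V : 'M[R]_(q, q')) (W : 'M[R]_(s, s')) :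
  objf B (X *m U) (Y *m V) (Z *m W) = objf (mlprod B X Y Z) U V W.
Proof. by rewrite /objf mlprod_mulmx. Qed.

End MultilinearProduct.

Section PaddingMatrix.
Variable R : realType.

Lemma sum_E0_mull (l k : nat) (h : (k <= l)%N) (b : 'I_k) (G : 'I_l -> R) :
  \sum_(a < l) E0 R l k a b * G a = G (widen_ord h b).
Proof.
rewrite (bigD1 (widen_ord h b)) //= mxE eqxx mul1r big1 ?addr0 // => a.
by rewrite mxE -val_eqE /= => /negbTE ->; rewrite mul0r.
Qed.

Lemma trmx_E0 (l k : nat) : (E0 R l k)^T = E0 R k l.
Proof. by apply/matrixP => b a; rewrite !mxE eq_sym. Qed.

Lemma E0_id (k : nat) : E0 R k k = 1%:M.
Proof. by apply/matrixP => a b; rewrite !mxE. Qed.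

Lemma mulmx_E0 (l k r : nat) : (r <= k)%N -> E0 R l k *m E0 R k r = E0 R l r.
Proof.
move=> h; apply/matrixP => a j; rewrite !mxE.
rewrite (eq_bigr (fun b => E0 R k r b j * E0 R l k a b)) => [|b _]; last exact: mulrC.
by rewrite (sum_E0_mull h) mxE.
Qed.

Lemma trmx_E0_mulmx_E0 (l k : nat) : (k <= l)%N -> (E0 R l k)^T *m E0 R l k = 1%:M.
Proof. by move=> h; rewrite trmx_E0 mulmx_E0 // E0_id. Qed.

Lemma mlprod_E0 (l m n k1 k2 k3 : nat) (h1 : (k1 <= l)%N) (h2 : (k2 <= m)%N)
    (h3 : (k3 <= n)%N) (B : tensor3 R l m n) :
  mlprod B (E0 R l k1) (E0 R m k2) (E0 R n k3) = lead_sub h1 h2 h3 B.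
Proof.
apply: funext => i; apply: funext => j; apply: funext => k.
rewrite mlprodE (sum_E0_mull h1); under eq_bigr do rewrite (sum_E0_mull h3).
by rewrite (sum_E0_mull h2).
Qed.

End PaddingMatrix.

Section Isometry.
Variable R : realType.

Lemma mulmx_isometry_gram (k l r : nat) (P : 'M[R]_(l, k)) (D : 'M[R]_(k, r)) :
  P^T *m P = 1%:M -> (P *m D)^T *m (P *m D) = D^T *m D.
Proof. by move=> iso; rewrite trmx_mul mulmxA -(mulmxA _ P^T) iso mulmx1. Qed.

Lemma mulmx_isometry_eq0 (k l r : nat) (P : 'M[R]_(l, k)) (D : 'M[R]_(k, r)) :
  P^T *m P = 1%:M -> (P *m D == 0) = (D == 0).
Proof.
move=> iso; apply/eqP/eqP => [PD0|->]; last exact: mulmx0.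
by rewrite -(mul1mx D) -iso -mulmxA PD0 mulmx0.
Qed.

Lemma grass_tangent_isometry (k l r : nat) (P : 'M[R]_(l, k)) (X D : 'M[R]_(k, r)) :
  P^T *m P = 1%:M -> grass_tangent X D -> grass_tangent (P *m X) (P *m D).
Proof.
rewrite /grass_tangent => iso XD0.
by rewrite trmx_mul -mulmxA (mulmxA P^T) iso mul1mx.
Qed.

End Isometry.

Section IsometricPullback.
Variables (R : realType) (l m n k1 k2 k3 p q s : nat).
Variables (P1 : 'M[R]_(l, k1)) (P2 : 'M[R]_(m, k2)) (P3 : 'M[R]_(n, k3)).
Hypotheses (iso1 : P1^T *m P1 = 1%:M) (iso2 : P2^T *m P2 = 1%:M)
  (iso3 : P3^T *m P3 = 1%:M).
Variables (F : 'M[R]_(l, p) -> 'M[R]_(m, q) -> 'M[R]_(n, s) -> R)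
  (G : 'M[R]_(k1, p) -> 'M[R]_(k2, q) -> 'M[R]_(k3, s) -> R).
Hypothesis G_pullback : forall U V W, G U V W = F (P1 *m U) (P2 *m V) (P3 *m W).

Lemma grass_hess3_pullback X Y Z DX DY DZ :
  grass_hess3 G X Y Z DX DY DZ =
  grass_hess3 F (P1 *m X) (P2 *m Y) (P3 *m Z) (P1 *m DX) (P2 *m DY) (P3 *m DZ).
Proof.
rewrite /grass_hess3 !mulmx_isometry_gram //.
congr (_ - _); [do 2 f_equal | f_equal];
  by apply: funext => t; rewrite G_pullback !(mulmxDr, scalemxAr, mulmxA).
Qed.

Lemma grass_hess3_posdef_pullback X Y Z :
  grass_hess3_posdef F (P1 *m X) (P2 *m Y) (P3 *m Z) ->
  grass_hess3_posdef G X Y Z.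
Proof.
move=> posF DX DY DZ tX tY tZ nz; rewrite grass_hess3_pullback.
apply: posF; [exact: grass_tangent_isometry iso1 tX
  | exact: grass_tangent_isometry iso2 tY
  | exact: grass_tangent_isometry iso3 tZ | ].
case=> /eqP + [/eqP + /eqP]; rewrite !mulmx_isometry_eq0 //.
by move=> /eqP DX0 /eqP DY0 /eqP DZ0; apply: nz.
Qed.

End IsometricPullback.

Theorem propositionA1 (R : realType) (l m n r1 r2 r3 k1 k2 k3 : nat)
  (B : tensor3 R l m n)
  (hr1 : (r1 < k1)%N) (hk1 : (k1 < l)%N)
  (hr2 : (r2 < k2)%N) (hk2 : (k2 < m)%N)
  (hr3 : (r3 < k3)%N) (hk3 : (k3 < n)%N) :
  grass_hess3_posdef (@objf R l m n r1 r2 r3 B)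
    (E0 R l r1) (E0 R m r2) (E0 R n r3) ->
  grass_hess3_posdef
    (@objf R k1 k2 k3 r1 r2 r3 (lead_sub (ltnW hk1) (ltnW hk2) (ltnW hk3) B))
    (E0 R k1 r1) (E0 R k2 r2) (E0 R k3 r3).
Proof.
move=> posf.
rewrite -(mulmx_E0 R l (ltnW hr1)) -(mulmx_E0 R m (ltnW hr2))
  -(mulmx_E0 R n (ltnW hr3)) in posf.
apply: (grass_hess3_posdef_pullback (trmx_E0_mulmx_E0 R (ltnW hk1))
  (trmx_E0_mulmx_E0 R (ltnW hk2)) (trmx_E0_mulmx_E0 R (ltnW hk3)) _ posf).
by move=> U V W; rewrite objf_mulmx (mlprod_E0 (ltnW hk1) (ltnW hk2) (ltnW hk3)).
Qed.
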